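(* Consider the following remote estimation model over the finite horizon $t=0,1,\ldots,T$. A scalar process evolves as $x(t+1)=a x(t)+w(t)$, with $a\in\mathbb{R}$, $x(0)\sim\mathcal{N}(0,1)$ and $\{w(t)\}$ i.i.d. $\mathcal{N}(0,\sigma^2)$. A channel state process $\{c(t)\}\subset\{0,1\}$ is a two-state Markov chain with $\mathbb{P}(c(t+1)=1\mid c(t)=0)=p_{01}$ and $\mathbb{P}(c(t+1)=0\mid c(t)=1)=p_{10}$. At each time $t$ a sensor chooses $u(t)\in\{0,1\}$ by $u(t)=\phi_t(\mathcal{I}(t))$, where $\phi_t$ is measurable and $\mathcal{I}(t)=(\{x(s),c(s)\}_{s=0}^{t},\{u(s)\}_{s=0}^{t-1})$. The estimator satisfies $\hat{x}(0)=0$, and for $t\ge 1$, $\hat{x}(t)=a\hat{x}(t-1)$ if $u(t)c(t)=0$ and $\hat{x}(t)=x(t)$ if $u(t)c(t)=1$. Define the error $\Delta(0)=0$ and $\Delta(t)=x(t)-a\hat{x}(t-1)$, and the cost $d(\Delta,c,u)=\lambda u+(1-uc)\Delta^2$ with $\lambda>0$. For $\gamma>0$ consider the problem of minimizing $\mathbb{E}_{\phi}\big[\exp\big(\gamma\sum_{t=0}^{T} d(\Delta(t),c(t),u(t))\big)\big]$ over policies $\phi=(\phi_0,\ldots,\phi_T)$. Then there is no loss of optimality in restricting to policies of the form $u(t)=\phi_t(\Delta(t),c(t))$; i.e., $\{(\Delta(t),c(t))\}$ is a controlled Markov process (an information state) with control $u(t)$, and the problem is a Markov decision process with state space $\mathbb{R}\times\{0,1\}$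 and action space $\{0,1\}$.
   Context: $\mathbb{E}_\phi$ denotes expectation under the probability measure induced by the policy $\phi$. The error evolves as $\Delta(t+1)=a\Delta(t)+w(t)$ if $u(t)c(t)=0$ and $\Delta(t+1)=w(t)$ if $u(t)c(t)=1$. *)

From HB Require Import structures.
From mathcomp Require Import all_boot all_order all_algebra.
From mathcomp Require Import all_classical all_reals all_analysis.
Set Implicit Arguments. Unset Strict Implicit. Unset Printing Implicit Defensive.
Import Order.TTheory GRing.Theory Num.Theory.
Local Open Scope classical_set_scope.
Local Open Scope ring_scope.

Section remote_estimation.
Variable R : realType.

(* Histories are stored in forward order: xs = [:: x(0); ...; x(t)],
   cs = [:: c(0); ...; c(t)], us = [:: u(0); ...; u(t-1)] (at time t). *)

Definition policy := nat -> seq R -> seq bool -> seq bool -> bool.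

Definition mpolicy := nat -> R -> bool -> bool.

(* phi_t is a measurable function of the information I(t), for t = 0..T
   (the discrete components c, u carry the discrete sigma-algebra, so joint
   measurability amounts to measurability in x(0..t) for each fixed (c,u)). *)
Definition policy_measurable (T : nat) (phi : policy) : Prop :=
  forall t (cs us : seq bool), (t <= T)%N -> size cs = t.+1 -> size us = t ->
    measurable_fun [set: (t.+1).-tuple R]
      (fun xs : (t.+1).-tuple R => phi t (tval xs) cs us).

Definition mpolicy_measurable (T : nat) (psi : mpolicy) : Prop :=
  forall t (c : bool), (t <= T)%N -> measurable_fun [set: R] (fun D : R => psi t D c).

Fixpoint xhat (a : R) (xs : seq R) (cs us : seq bool) (t : nat) : R :=
  match t with
  | 0 => 0
  | t'.+1 => if nth false us t && nth false cs t then nth 0 xs t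
             else a * xhat a xs cs us t'
  end.

Definition Delta (a : R) (xs : seq R) (cs us : seq bool) (t : nat) : R :=
  match t with
  | 0 => 0
  | t'.+1 => nth 0 xs t - a * xhat a xs cs us t'
  end.

Definition stage_cost (lambda : R) (D : R) (c u : bool) : R :=
  lambda * (u%:R) + (1 - (u && c)%:R) * D ^+ 2.

Definition chan_trans (p01 p10 : R) (c c' : bool) : R :=
  if c then (if c' then 1 - p10 else p10) else (if c' then p01 else 1 - p01).

Definition chan_init (pi1 : R) (c : bool) : R := if c then pi1 else 1 - pi1.

(* Conditional expectation, given the history (xs, cs, us) at time t, of
   exp(gamma * sum_{s=t}^{t+n} d(Delta(s), c(s), u(s))) under policy phi,
   computed by iterated integration over w(t) ~ N(0, sigma^2) and c(t+1). *)
Fixpoint cost_to_go (a sigma lambda gamma p01 p10 : R) (phi : policy)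
    (n t : nat) (xs : seq R) (cs us : seq bool) {struct n} : \bar R :=
  let u := phi t xs cs us in
  let e := expR (gamma * stage_cost lambda (Delta a xs cs us t) (nth false cs t) u) in
  match n with
  | 0 => (e%:E)%E
  | n'.+1 =>
      (e%:E *
       \int[normal_prob 0 sigma]_w
          ((chan_trans p01 p10 (nth false cs t) false)%:E *
             cost_to_go a sigma lambda gamma p01 p10 phi n' t.+1
               (rcons xs (a * nth 0 xs t + w)%R) (rcons cs false) (rcons us u)
           + (chan_trans p01 p10 (nth false cs t) true)%:E *
             cost_to_go a sigma lambda gamma p01 p10 phi n' t.+1
               (rcons xs (a * nth 0 xs t + w)%R) (rcons cs true) (rcons us u)))%E
  end.

Definition total_cost (a sigma lambda gamma p01 p10 pi1 : R) (T : nat)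
    (phi : policy) : \bar R :=
  (\int[normal_prob 0 1]_x0
     ((chan_init pi1 false)%:E *
        cost_to_go a sigma lambda gamma p01 p10 phi T 0 [:: x0] [:: false] [::]
      + (chan_init pi1 true)%:E *
        cost_to_go a sigma lambda gamma p01 p10 phi T 0 [:: x0] [:: true] [::]))%E.

Definition lift_mpolicy (a : R) (psi : mpolicy) : policy :=
  fun t xs cs us => psi t (Delta a xs cs us t) (nth false cs t).

End remote_estimation.

From HB Require Import structures.
From mathcomp Require Import all_boot all_order all_algebra.
From mathcomp Require Import all_classical all_reals all_analysis.
From mathcomp Require Import ring measurable_realfun.
Import Order.TTheory GRing.Theory Num.Theory.
Local Open Scope classical_set_scope.
Local Open Scope ring_scope.
Set Implicit Arguments. Unset Strict Implicit. Unset Printing Implicit Defensive.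

(* Dynamic programming on the state (Delta, c).  For t >= 1 the next error is
   w(t) if u(t) c(t) = 1 and a Delta(t) + w(t) otherwise, and c(t+1) depends
   only on c(t), so backward induction defines a value function V_n(Delta, c)
   which bounds from below, history by history, the conditional cost-to-go of
   every policy (measurable or not); the greedy Markov policy attains V_n and
   is measurable because V_n is.  At t = 0 the error is 0 and Delta(1) = x(1)
   does not depend on u(0), so not transmitting is optimal there. *)

(* Unlike [ge0_le_integral], no measurability is needed: the integral of a
   nonnegative function is a supremum over the simple functions below it. *)
Lemma ge0_le_integral_nonmeasurable d (T : measurableType d) (R : realType)
    (mu : {measure set T -> \bar R}) (f g : T -> \bar R) :
  (forall x, (0 <= f x)%E) -> (forall x, (f x <= g x)%E) ->
  (\int[mu]_x f x <= \int[mu]_x g x)%E.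
Proof.
move=> f0 fg; have g0 x : (0 <= g x)%E by exact: le_trans (f0 x) (fg x).
rewrite !ge0_integralTE//; apply: ereal_sup_le => _ [h hf <-].
by exists h => //= x; exact: le_trans (hf x) (fg x).
Qed.

Section mixture.
Local Open Scope ereal_scope.
Context d (T : measurableType d) (R : realType).
Implicit Types (p : bool -> R) (F G : T -> bool -> \bar R).

Definition mixture (mu : {measure set T -> \bar R}) p F : \bar R :=
  \int[mu]_x ((p false)%:E * F x false + (p true)%:E * F x true).

Variable mu : {measure set T -> \bar R}.

Lemma mixture_ge0 p F : (forall b, 0 <= p b)%R -> (forall x b, 0 <= F x b) ->
  0 <= mixture mu p F.
Proof.
move=> p0 F0; apply: integral_ge0 => x _.
by apply: adde_ge0; apply: mule_ge0; rewrite ?lee_fin.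
Qed.

Lemma le_mixture p F G : (forall b, 0 <= p b)%R -> (forall x b, 0 <= F x b) ->
  (forall x b, F x b <= G x b) -> mixture mu p F <= mixture mu p G.
Proof.
move=> p0 F0 FG; apply: ge0_le_integral_nonmeasurable => x.
  by apply: adde_ge0; apply: mule_ge0; rewrite ?lee_fin.
by apply: leeD; apply: lee_wpmul2l; rewrite ?lee_fin.
Qed.

End mixture.

Lemma measurable_mixture d d' (S : measurableType d') (T : measurableType d)
    (R : realType) (mu : {sigma_finite_measure set T -> \bar R}) (p : bool -> R)
    (F : S -> T -> bool -> \bar R) :
  (forall b, 0 <= p b) -> (forall y x b, (0 <= F y x b)%E) ->
  (forall b, measurable_fun setT (fun z : S * T => F z.1 z.2 b)) ->
  measurable_fun setT (fun y => mixture mu p (F y)).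
Proof.
move=> p0 F0 mF.
apply: (measurable_fun_fubini_tonelli_F
  (fun z => (p false)%:E * F z.1 z.2 false + (p true)%:E * F z.1 z.2 true)%E).
  by apply: emeasurable_funD; apply: emeasurable_funM.
by move=> z; apply: adde_ge0; apply: mule_ge0; rewrite ?lee_fin.
Qed.

Section error_dynamics.
Context (R : realType) (a : R).

Definition next_error (u c : bool) (D w : R) : R :=
  if u && c then w else a * D + w.

Lemma xhat_rcons (xs : seq R) (cs us : seq bool) y c u k :
  (k < size xs)%N -> (k < size cs)%N -> (k < size us)%N ->
  xhat a (rcons xs y) (rcons cs c) (rcons us u) k = xhat a xs cs us k.
Proof.
elim: k => [|k IH] //= kx kc ku.
by rewrite !nth_rcons kx kc ku IH // ltnW.
Qed.

Lemma Delta_rcons (xs : seq R) (cs us : seq bool) t c' u w :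
  (0 < t)%N -> size xs = t.+1 -> size cs = t.+1 -> size us = t ->
  Delta a (rcons xs (a * nth 0 xs t + w)) (rcons cs c') (rcons us u) t.+1
  = next_error u (nth false cs t) (Delta a xs cs us t) w.
Proof.
case: t => [//|t] _ hx hc hu.
rewrite /Delta /next_error /= !nth_rcons hx hc hu ltnn eqxx !ltnSn.
rewrite xhat_rcons ?hx ?hc ?hu // ltnn eqxx.
by case: (u && nth false cs t.+1) => /=; ring.
Qed.

Lemma measurable_nth_tuple n k :
  measurable_fun setT (fun xs : n.-tuple R => nth 0 (tval xs) k).
Proof.
case: (ltnP k n) => kn.
  rewrite (_ : (fun xs => _) = fun xs => tnth xs (Ordinal kn)).
    exact: measurable_tnth.
  by apply/funext => xs; rewrite (tnth_nth 0).
rewrite (_ : (fun xs => _) = fun=> 0); first exact: measurable_cst.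
by apply/funext => xs; rewrite nth_default // size_tuple.
Qed.

Lemma measurable_xhat n (cs us : seq bool) k :
  measurable_fun setT (fun xs : n.-tuple R => xhat a (tval xs) cs us k).
Proof.
elim: k => [|k IH] /=; first exact: measurable_cst.
case: (_ && _); first exact: measurable_nth_tuple.
exact: measurable_funM.
Qed.

Lemma measurable_Delta n (cs us : seq bool) t :
  measurable_fun setT (fun xs : n.-tuple R => Delta a (tval xs) cs us t).
Proof.
case: t => [|t] /=; first exact: measurable_cst.
apply: measurable_funB; first exact: measurable_nth_tuple.
by apply: measurable_funM => //; exact: measurable_xhat.
Qed.

Lemma measurable_lift_mpolicy T (psi : mpolicy R) :
  mpolicy_measurable T psi -> policy_measurable T (lift_mpolicy a psi).
Proof.
move=> mpsi t cs us tT _ _.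
exact: measurableT_comp (mpsi t _ tT) (measurable_Delta _ _ _).
Qed.

End error_dynamics.

Section bellman.
Local Open Scope ereal_scope.
Context (R : realType) (a sigma lambda gamma p01 p10 : R).
Hypotheses (hp01 : (0 <= p01 <= 1)%R) (hp10 : (0 <= p10 <= 1)%R).

Local Notation cost_to_go := (cost_to_go a sigma lambda gamma p01 p10).

Definition stage_exp (D : R) (c u : bool) : \bar R :=
  (expR (gamma * stage_cost lambda D c u))%:E.

Definition bellman (V : R -> bool -> \bar R) (u : bool) (D : R) (c : bool) :=
  stage_exp D c u * mixture (normal_prob 0 sigma) (chan_trans p01 p10 c)
                            (fun w c' => V (next_error a u c D w) c').

Fixpoint value (n : nat) (D : R) (c : bool) : \bar R :=
  let q u := if n is n'.+1 then bellman (value n') u D c else stage_exp D c u in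
  mine (q false) (q true).

Definition qvalue (n : nat) (u : bool) (D : R) (c : bool) : \bar R :=
  if n is n'.+1 then bellman (value n') u D c else stage_exp D c u.

Definition greedy (n : nat) (D : R) (c : bool) : bool :=
  qvalue n true D c < qvalue n false D c.

Definition greedy_policy (T : nat) : mpolicy R :=
  fun t D c => (t != 0)%N && greedy (T - t) D c.

Lemma valueE n D c : value n D c = mine (qvalue n false D c) (qvalue n true D c).
Proof. by case: n. Qed.

Lemma value_greedy n D c : value n D c = qvalue n (greedy n D c) D c.
Proof. by rewrite valueE minEle leNgt /greedy; case: (_ < _). Qed.

Lemma value_le n u D c : value n D c <= qvalue n u D c.
Proof. by rewrite valueE; case: u; rewrite ge_min lexx ?orbT. Qed.

Lemma chan_trans_ge0 c c' : (0 <= chan_trans p01 p10 c c')%R.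
Proof.
case/andP: hp01 => ? ?; case/andP: hp10 => ? ?.
by case: c; case: c' => /=; rewrite ?subr_ge0.
Qed.

Lemma stage_exp_ge0 D c u : 0 <= stage_exp D c u.
Proof. by rewrite lee_fin expR_ge0. Qed.

Lemma value_ge0 n D c : 0 <= value n D c.
Proof.
elim: n D c => [|n IH] D c; rewrite value_greedy; first exact: stage_exp_ge0.
apply: mule_ge0; first exact: stage_exp_ge0.
by apply: mixture_ge0 => *; rewrite ?chan_trans_ge0 ?IH.
Qed.

Lemma cost_to_go0 phi t xs cs us : cost_to_go phi 0 t xs cs us
  = stage_exp (Delta a xs cs us t) (nth false cs t) (phi t xs cs us).
Proof. by []. Qed.

Lemma cost_to_goS phi n t xs cs us : cost_to_go phi n.+1 t xs cs us
  = stage_exp (Delta a xs cs us t) (nth false cs t) (phi t xs cs us) *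
    mixture (normal_prob 0 sigma) (chan_trans p01 p10 (nth false cs t))
      (fun w c' => cost_to_go phi n t.+1 (rcons xs (a * nth 0 xs t + w)%R)
                              (rcons cs c') (rcons us (phi t xs cs us))).
Proof. by []. Qed.

Lemma cost_to_go_ge0 phi n t xs cs us : 0 <= cost_to_go phi n t xs cs us.
Proof.
elim: n t xs cs us => [|n IH] t xs cs us.
  by rewrite cost_to_go0 stage_exp_ge0.
rewrite cost_to_goS; apply: mule_ge0; first exact: stage_exp_ge0.
by apply: mixture_ge0 => *; rewrite ?chan_trans_ge0 ?IH.
Qed.

Lemma value_le_cost_to_go phi n t xs cs us :
  (0 < t)%N -> size xs = t.+1 -> size cs = t.+1 -> size us = t ->
  value n (Delta a xs cs us t) (nth false cs t) <= cost_to_go phi n t xs cs us.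
Proof.
elim: n t xs cs us => [|n IH] t xs cs us t0 hx hc hu;
  apply: le_trans (value_le _ (phi t xs cs us) _ _) _; first by [].
rewrite cost_to_goS; apply: lee_wpmul2l; first exact: stage_exp_ge0.
apply: le_mixture => [|w b|w b]; [exact: chan_trans_ge0|exact: value_ge0|].
have := IH t.+1 (rcons xs (a * nth 0 xs t + w)%R) (rcons cs b)
  (rcons us (phi t xs cs us)) isT.
by rewrite !size_rcons hx hc hu Delta_rcons // nth_rcons hc ltnn eqxx; apply.
Qed.

Lemma lift_greedy_policy T t xs cs us : (0 < t)%N ->
  lift_mpolicy a (greedy_policy T) t xs cs us
  = greedy (T - t) (Delta a xs cs us t) (nth false cs t).
Proof. by rewrite /lift_mpolicy /greedy_policy -lt0n => ->. Qed.

Lemma cost_to_go_greedy T n t xs cs us :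
  (0 < t)%N -> (T - t)%N = n ->
  size xs = t.+1 -> size cs = t.+1 -> size us = t ->
  cost_to_go (lift_mpolicy a (greedy_policy T)) n t xs cs us
  = value n (Delta a xs cs us t) (nth false cs t).
Proof.
elim: n t xs cs us => [|n IH] t xs cs us t0 Tt hx hc hu;
  rewrite value_greedy -[in greedy _]Tt -lift_greedy_policy //.
rewrite cost_to_goS; congr (_ * mixture _ _ _).
apply/funext => w; apply/funext => b.
rewrite IH ?size_rcons ?hx ?hc ?hu ?subnS ?Tt //.
by rewrite Delta_rcons // nth_rcons hc ltnn eqxx.
Qed.

Section time_zero.
Hypotheses (hlambda : (0 < lambda)%R) (hgamma : (0 < gamma)%R).

Lemma stage_exp0_le c u : stage_exp 0 c false <= stage_exp 0 c u.
Proof.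
rewrite lee_fin ler_expR /stage_cost expr0n /= !mulr0 !addr0 mulr0.
by rewrite !mulr_ge0 ?ler0n ?ltW.
Qed.

Lemma cost_to_go_greedy_le T phi x0 c :
  cost_to_go (lift_mpolicy a (greedy_policy T)) T 0 [:: x0] [:: c] [::]
  <= cost_to_go phi T 0 [:: x0] [:: c] [::].
Proof.
have greedy0 : lift_mpolicy a (greedy_policy T) 0%N [:: x0] [:: c] [::] = false
  by [].
set u := phi 0%N [:: x0] [:: c] [::].
case: T greedy0 => [|n] greedy0.
  by rewrite !cost_to_go0 greedy0; exact: stage_exp0_le.
rewrite !cost_to_goS greedy0 -/u.
apply: le_trans (lee_wpmul2r _ (stage_exp0_le c u)); last first.
  by apply: mixture_ge0 => *; rewrite ?chan_trans_ge0 ?cost_to_go_ge0.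
apply: lee_wpmul2l; first exact: stage_exp_ge0.
apply: le_mixture => [|w b|w b]; [exact: chan_trans_ge0|exact: cost_to_go_ge0|].
have Delta1 us : Delta a [:: x0; (a * x0 + w)%R] [:: c; b] us 1 = (a * x0 + w)%R
  by rewrite /= mulr0 subr0.
rewrite (cost_to_go_greedy (n := n)) ?subn1 // Delta1.
have := @value_le_cost_to_go phi n 1%N [:: x0; (a * x0 + w)%R] [:: c; b] [:: u].
by rewrite Delta1; apply.
Qed.

End time_zero.

Lemma measurable_stage_exp c u : measurable_fun setT (fun D : R => stage_exp D c u).
Proof.
apply/measurable_EFinP; apply: measurableT_comp; first exact: measurable_expR.
by apply: measurable_funM => //; apply: measurable_funD => //; exact: measurable_funM.
Qed.

Lemma measurable_bellman V u c :
  (forall D c', 0 <= V D c') ->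
  (forall c', measurable_fun setT (fun D : R => V D c')) ->
  measurable_fun setT (fun D => bellman V u D c).
Proof.
move=> V0 mV; apply: emeasurable_funM; first exact: measurable_stage_exp.
apply: measurable_mixture => [|D w b|b]; [exact: chan_trans_ge0|exact: V0|].
apply: (measurableT_comp (mV b)); rewrite /next_error; case: (u && c).
  exact: measurable_snd.
by apply: measurable_funD => //; apply: measurable_funM => //; exact: measurable_fst.
Qed.

Lemma measurable_value n c : measurable_fun setT (fun D : R => value n D c).
Proof.
elim: n c => [|n IH] c /=; apply: measurable_mine.
- exact: measurable_stage_exp.
- exact: measurable_stage_exp.
- exact: measurable_bellman (@value_ge0 n) IH.
- exact: measurable_bellman (@value_ge0 n) IH.
Qed.

Lemma measurable_qvalue n u c : measurable_fun setT (fun D : R => qvalue n u D c).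
Proof.
case: n => [|n]; first exact: measurable_stage_exp.
exact: measurable_bellman (@value_ge0 n) (measurable_value n).
Qed.

Lemma measurable_greedy_policy T : mpolicy_measurable T (greedy_policy T).
Proof.
move=> [|t] c _ /=; first exact: measurable_cst.
exact: measurable_fun_lte (measurable_qvalue _ _ _) (measurable_qvalue _ _ _).
Qed.

End bellman.

Lemma chan_init_ge0 (R : realType) (pi1 : R) c :
  0 <= pi1 <= 1 -> 0 <= chan_init pi1 c.
Proof. by case/andP => ? ?; case: c; rewrite /= ?subr_ge0. Qed.

Lemma total_costE (R : realType) (a sigma lambda gamma p01 p10 pi1 : R) T phi :
  total_cost a sigma lambda gamma p01 p10 pi1 T phi
  = mixture (normal_prob 0 1) (chan_init pi1)
      (fun x0 c => cost_to_go a sigma lambda gamma p01 p10 phi T 0 [:: x0] [:: c] [::]).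
Proof. by []. Qed.

Theorem lemma1 (R : realType) (a sigma lambda gamma p01 p10 pi1 : R) (T : nat)
    (hsigma : 0 < sigma) (hlambda : 0 < lambda) (hgamma : 0 < gamma)
    (hp01 : 0 <= p01 <= 1) (hp10 : 0 <= p10 <= 1) (hpi1 : 0 <= pi1 <= 1) :
  ereal_inf [set total_cost a sigma lambda gamma p01 p10 pi1 T phi
            | phi in [set phi : policy R | policy_measurable T phi]]
  = ereal_inf [set total_cost a sigma lambda gamma p01 p10 pi1 T (lift_mpolicy a psi)
              | psi in [set psi : mpolicy R | mpolicy_measurable T psi]].
Proof.
set psi_star := greedy_policy a sigma lambda gamma p01 p10 T.
apply/eqP; rewrite eq_le; apply/andP; split.
  apply: ereal_inf_le_tmp => _ [psi mpsi <-]; exists (lift_mpolicy a psi) => //.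
  exact: measurable_lift_mpolicy.
apply: le_ereal_inf_tmp => _ [phi _ <-].
apply: (@le_trans _ _ (total_cost a sigma lambda gamma p01 p10 pi1 T
                                  (lift_mpolicy a psi_star))).
  by apply: ereal_inf_lbound; exists psi_star => //; exact: measurable_greedy_policy.
rewrite !total_costE; apply: le_mixture => [b|x b|x b].
- exact: chan_init_ge0.
- exact: cost_to_go_ge0.
- exact: cost_to_go_greedy_le.
Qed.
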